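(* For every activity-breaking channel $\mathcal P$ on $S$, the inclusion $\mathcal P(\mathsf P(S))\subseteq\mathsf P(S)$ is strict; that is, there is no activity-breaking channel with $\mathcal P(\mathsf P(S))=\mathsf P(S)$. In particular no activity-breaking channel satisfies $\mathcal P(\tau)=\tau$ for all $\tau\in\mathsf P(S)$.
   Context: $S$ is a $d$-dimensional quantum system ($d\ge2$) with non-degenerate Hamiltonian $H=\sum_i E_i|i\rangle\langle i|$, $E_1<\dots<E_d$. $\mathsf{St}(S)$ is the set of density matrices; $\mathsf P(S)$ is the set of passive states, i.e. states $\sum_ip_i|i\rangle\langle i|$ with $p_1\ge\dots\ge p_d$. A quantum channel $\mathcal P$ is activity breaking if $\mathcal P(\rho)\in\mathsf P(S)$ for every $\rho\in\mathsf{St}(S)$. *)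

From HB Require Import structures.
From mathcomp Require Import all_boot all_order all_algebra.
Set Implicit Arguments. Unset Strict Implicit. Unset Printing Implicit Defensive.
Import Order.TTheory GRing.Theory Num.Theory.
Local Open Scope ring_scope.

Section Quantum.
Variables (C : numClosedFieldType) (d : nat).

Definition adj (A : 'M[C]_d) : 'M[C]_d := (map_mx Num.conj A)^T.

Definition psd (A : 'M[C]_d) : Prop :=
  forall v : 'cV[C]_d, 0 <= ((map_mx Num.conj v)^T *m A *m v) 0 0.

Definition is_state (rho : 'M[C]_d) : Prop := psd rho /\ \tr rho = 1.

Definition hamiltonian (E : 'I_d -> C) : 'M[C]_d := diag_mx (\row_i E i).

Definition is_passive (E : 'I_d -> C) (rho : 'M[C]_d) : Prop :=
  is_state rho /\
  (forall i j : 'I_d, i != j -> rho i j = 0) /\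
  (forall i j : 'I_d, E i < E j -> rho j j <= rho i i).

(* quantum channel = CPTP map, given in Kraus form *)
Definition is_channel (P : 'M[C]_d -> 'M[C]_d) : Prop :=
  exists (n : nat) (K : 'I_n -> 'M[C]_d),
    \sum_(k < n) adj (K k) *m K k = 1%:M /\
    forall rho : 'M[C]_d, P rho = \sum_(k < n) K k *m rho *m adj (K k).

Definition activity_breaking (E : 'I_d -> C) (P : 'M[C]_d -> 'M[C]_d) : Prop :=
  is_channel P /\ forall rho, is_state rho -> is_passive E (P rho).

End Quantum.

From mathcomp Require Import all_boot all_order all_algebra.
Set Implicit Arguments. Unset Strict Implicit. Unset Printing Implicit Defensive.
Import Order.TTheory GRing.Theory Num.Theory.
Local Open Scope ring_scope.

(* A channel acts linearly, and a passive state tau is diagonal, so the ground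
   population of P tau is the convex combination sum_k tau_kk a_k of the numbers
   a_k := <0| P(|k><k|) |0>, with weight tau_00 > 0 on a_0.  Every output of P
   is passive, hence has ground population in [1/d, 1]; so a_k lies in [1/d, 1]
   for all k.  Reaching the ground state |0><0| forces the combination to equal
   its upper bound 1, hence a_0 = 1; reaching the maximally mixed state I/d
   forces it to equal its lower bound 1/d, hence a_0 = 1/d.  As d >= 2 these
   cannot both hold, so one of the two passive states is missed by P, and in
   particular P does not fix it. *)

Lemma convex_comb_eq_ub (R : numDomainType) (I : finType) (w a : I -> R) (b : R) :
  (forall k, 0 <= w k) -> \sum_k w k = 1 -> (forall k, a k <= b) ->
  \sum_k w k * a k = b -> forall k, w k != 0 -> a k = b.
Proof.
move=> w_ge0 sum_w a_le_b sum_wa k wk_neq0.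
have sum_gap : \sum_k w k * (b - a k) = 0.
  under eq_bigr do rewrite mulrBr.
  by rewrite sumrB -mulr_suml sum_w mul1r sum_wa subrr.
have gap_ge0 i : true -> 0 <= w i * (b - a i).
  by move=> _; rewrite mulr_ge0 // subr_ge0.
have /eqP := psumr_eq0P gap_ge0 sum_gap (i := k) isT.
by rewrite mulf_eq0 (negbTE wk_neq0) subr_eq0 => /eqP.
Qed.

Lemma convex_comb_eq_lb (R : numDomainType) (I : finType) (w a : I -> R) (b : R) :
  (forall k, 0 <= w k) -> \sum_k w k = 1 -> (forall k, b <= a k) ->
  \sum_k w k * a k = b -> forall k, w k != 0 -> a k = b.
Proof.
move=> w_ge0 sum_w b_le_a sum_wa k wk_neq0; apply: oppr_inj.
apply: (convex_comb_eq_ub (a := fun k => - a k)) => // [i|].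
  by rewrite lerN2.
by under eq_bigr do rewrite mulrN; rewrite sumrN sum_wa.
Qed.

Section States.
Variables (C : numClosedFieldType) (d : nat).
Implicit Types (A rho : 'M[C]_d).

Lemma psd_diag_ge0 A i : psd A -> 0 <= A i i.
Proof.
have conj_delta : (map_mx Num.conj (delta_mx i 0 : 'cV[C]_d))^T = delta_mx 0 i.
  apply/matrixP=> r s; rewrite !mxE andbC.
  by case: (_ && _); rewrite ?conjC1 ?conjC0.
by move/(_ (delta_mx i 0)); rewrite conj_delta -rowE -colE !mxE.
Qed.

Lemma psd_delta k : psd (delta_mx k k : 'M[C]_d).
Proof.
move=> v; rewrite -(@mul_delta_mx C d 1 d 0 k k) !mulmxA -colE -mulmxA -rowE.
by rewrite !mxE big_ord1 !mxE mulrC mul_conjC_ge0.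
Qed.

Lemma psd_scalar (c : C) : 0 <= c -> psd (c%:M : 'M[C]_d).
Proof.
move=> c_ge0 v; rewrite mul_mx_scalar -scalemxAl !mxE mulr_ge0 //.
by apply: sumr_ge0 => i _; rewrite !mxE mulrC mul_conjC_ge0.
Qed.

Lemma state_diag_le1 rho i : is_state rho -> rho i i <= 1.
Proof.
case=> rho_psd <-; rewrite /mxtrace (bigD1 i) //= lerDl.
by apply: sumr_ge0 => j _; apply: psd_diag_ge0.
Qed.

Lemma state_delta k : is_state (delta_mx k k : 'M[C]_d).
Proof.
split; first exact: psd_delta.
rewrite /mxtrace (bigD1 k) //= big1 ?addr0; first by rewrite mxE !eqxx.
by move=> i /negbTE ik; rewrite mxE ik.
Qed.

Lemma state_maximally_mixed : (0 < d)%N -> is_state ((d%:R^-1)%:M : 'M[C]_d).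
Proof.
move=> d_gt0; split; first by apply: psd_scalar; rewrite invr_ge0 ler0n.
by rewrite mxtrace_scalar -[_ *+ d]mulr_natr mulVf // pnatr_eq0 -lt0n.
Qed.

Lemma offdiag0_sum_delta A :
  (forall i j, i != j -> A i j = 0) -> A = \sum_k A k k *: delta_mx k k.
Proof.
move=> A_diag; apply/matrixP=> i j; rewrite summxE.
under eq_bigr do rewrite !mxE.
rewrite (bigD1 i) //= big1 => [|k]; last by rewrite eq_sym => /negbTE ->; rewrite mulr0.
case: (eqVneq i j) => [->|ij]; first by rewrite !eqxx mulr1 addr0.
by rewrite A_diag // andbF mulr0 addr0.
Qed.

Lemma channel_linear_comb (P : 'M[C]_d -> 'M[C]_d) (I : finType)
    (c : I -> C) (M : I -> 'M[C]_d) :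
  is_channel P -> P (\sum_k c k *: M k) = \sum_k c k *: P (M k).
Proof.
case=> n [K [_ P_kraus]]; rewrite P_kraus.
under eq_bigr do rewrite mulmx_sumr mulmx_suml.
rewrite exchange_big /=; apply: eq_bigr => k _.
rewrite P_kraus scaler_sumr; apply: eq_bigr => l _.
by rewrite -scalemxAr !scalemxAl.
Qed.

End States.

Section Passive.
Variables (C : numClosedFieldType) (n : nat) (E : 'I_n.+1 -> C).
Hypothesis E_incr : forall i j : 'I_n.+1, (i < j)%N -> E i < E j.
Implicit Types (tau : 'M[C]_n.+1).

Let mixed : 'M[C]_n.+1 := (n.+1%:R^-1)%:M.

Lemma ground_energy_lt (i : 'I_n.+1) : i != ord0 -> E ord0 < E i.
Proof. by move=> i_neq0; apply: E_incr; rewrite lt0n. Qed.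

Lemma passive_ground_pop_ge tau : is_passive E tau -> n.+1%:R^-1 <= tau ord0 ord0.
Proof.
case=> [[_ tr_tau] [_ tau_decr]].
rewrite -[_^-1]mul1r ler_pdivrMr ?ltr0Sn // -[X in X <= _]tr_tau.
have -> : tau ord0 ord0 * n.+1%:R = \sum_(k < n.+1) tau ord0 ord0.
  by rewrite sumr_const card_ord mulr_natr.
apply: ler_sum => k _.
by case: (eqVneq k ord0) => [-> // | k_neq0]; apply/tau_decr/ground_energy_lt.
Qed.

Lemma passive_ground_pop_neq0 tau : is_passive E tau -> tau ord0 ord0 != 0.
Proof.
move/passive_ground_pop_ge => pop_ge.
by rewrite gt_eqF // (lt_le_trans _ pop_ge) // invr_gt0 ltr0Sn.
Qed.

Lemma passive_ground_state : is_passive E (delta_mx ord0 ord0).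
Proof.
split; first exact: state_delta.
split=> [i j ij | i j Ei_lt_Ej]; rewrite !mxE.
  by case: (eqVneq i ord0) ij => [->|] //; rewrite eq_sym => /negbTE ->.
case: (eqVneq j ord0) => [j0 | _]; last by rewrite ler0n.
have i_neq0 : i != ord0 by apply: contraTneq Ei_lt_Ej => ->; rewrite j0 ltxx.
by have := ground_energy_lt i_neq0; rewrite -j0 => /(lt_trans Ei_lt_Ej); rewrite ltxx.
Qed.

Lemma passive_maximally_mixed : is_passive E mixed.
Proof.
split; first exact: state_maximally_mixed.
by split=> [i j /negbTE ij | i j _]; rewrite !mxE ?ij ?eqxx.
Qed.

Variable P : 'M[C]_n.+1 -> 'M[C]_n.+1.
Hypothesis P_breaking : activity_breaking E P.

Let ground_response k := P (delta_mx k k) ord0 ord0.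

Lemma channel_ground_pop tau :
  is_passive E tau -> P tau ord0 ord0 = \sum_k tau k k * ground_response k.
Proof.
case=> _ [tau_diag _]; rewrite {1}(offdiag0_sum_delta tau_diag).
rewrite channel_linear_comb; last by case: P_breaking.
by rewrite summxE; apply: eq_bigr => k _; rewrite mxE.
Qed.

Lemma ground_response_bounds k :
  n.+1%:R^-1 <= ground_response k /\ ground_response k <= 1.
Proof.
have out_passive := P_breaking.2 _ (state_delta C k).
by split; [exact: passive_ground_pop_ge | exact: state_diag_le1 out_passive.1].
Qed.

Lemma preimage_ground_state tau :
  is_passive E tau -> P tau = delta_mx ord0 ord0 -> ground_response ord0 = 1.
Proof.
move=> tau_passive P_tau; have [[_ tr_tau] _] := tau_passive.
apply: (convex_comb_eq_ub _ tr_tau) (passive_ground_pop_neq0 tau_passive).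
- by move=> k; apply: psd_diag_ge0; case: tau_passive => -[].
- by move=> k; case: (ground_response_bounds k).
- by rewrite -channel_ground_pop // P_tau mxE eqxx.
Qed.

Lemma preimage_maximally_mixed tau :
  is_passive E tau -> P tau = mixed -> ground_response ord0 = n.+1%:R^-1.
Proof.
move=> tau_passive P_tau; have [[_ tr_tau] _] := tau_passive.
apply: (convex_comb_eq_lb _ tr_tau) (passive_ground_pop_neq0 tau_passive).
- by move=> k; apply: psd_diag_ge0; case: tau_passive => -[].
- by move=> k; case: (ground_response_bounds k).
- by rewrite -channel_ground_pop // P_tau mxE eqxx mulr1n.
Qed.

Lemma exists_passive_unreached : (0 < n)%N ->
  exists sigma, is_passive E sigma /\
    ~ (exists tau, is_passive E tau /\ P tau = sigma).
Proof.
move=> n_gt0; case: (eqVneq (ground_response ord0) 1) => [resp1 | resp_neq1].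
- exists mixed; split=> [|[tau [tau_passive /(preimage_maximally_mixed tau_passive)]]].
    exact: passive_maximally_mixed.
  rewrite resp1 => /esym /eqP; rewrite invr_eq1 pnatr_eq1.
  by move/eqP=> [n0]; rewrite n0 in n_gt0.
- exists (delta_mx ord0 ord0); split; first exact: passive_ground_state.
  by move=> [tau [/preimage_ground_state /[apply]]]; apply/eqP.
Qed.

End Passive.

Theorem mainTheorem17 (C : numClosedFieldType) (d : nat) (hd : (2 <= d)%N)
  (E : 'I_d -> C) (hE : forall i j : 'I_d, (i < j)%N -> E i < E j)
  (P : 'M[C]_d -> 'M[C]_d) (hP : activity_breaking E P) :
  (exists sigma, is_passive E sigma /\
     ~ (exists tau, is_passive E tau /\ P tau = sigma)) /\
  (exists tau, is_passive E tau /\ P tau <> tau).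
Proof.
case: d hd E hE P hP => [//|n] n_gt0 E hE P hP.
have [sigma [sigma_passive unreached]] := exists_passive_unreached hE hP n_gt0.
split; first by exists sigma.
by exists sigma; split=> // P_sigma; apply: unreached; exists sigma.
Qed.
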